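(* Let $D\le F\le G$ be locally finite graphs ($D$ a subgraph of $F$, $F$ a subgraph of $G$). Then any two of the following statements imply the third: (1) $D$ is faithful to $F$; (2) $F$ is faithful to $G$; (3) $D$ is faithful to $G$.
   Context: A ray is a one-way infinite path; two rays of a graph $H$ are equivalent in $H$ if for every finite $S\subseteq V(H)$ some component of $H-S$ contains tails of both; the classes are the ends of $H$. A subgraph $A$ of $B$ is faithful to $B$ if (i) every end of $B$ contains a ray of $A$, and (ii) any two rays of $A$ are equivalent in $A$ if and only if they are equivalent in $B$. *)

From Stdlib Require Import List Arith.
Import ListNotations.

Record graph (V : Type) := Graph {
  gv : V -> Prop;
  ge : V -> V -> Prop;
  ge_sym : forall x y, ge x y -> ge y x;
  ge_irrefl : forall x, ~ ge x x;
  ge_vert : forall x y, ge x y -> gv x /\ gv y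
}.
Arguments gv {V} g x.
Arguments ge {V} g x y.

Definition subgraph {V} (A B : graph V) : Prop :=
  (forall x, gv A x -> gv B x) /\ (forall x y, ge A x y -> ge B x y).

Definition locally_finite {V} (H : graph V) : Prop :=
  forall v, gv H v -> exists l : list V, forall w, ge H v w -> In w l.

Definition is_ray {V} (H : graph V) (r : nat -> V) : Prop :=
  (forall n m, r n = r m -> n = m) /\
  (forall n, gv H (r n)) /\
  (forall n, ge H (r n) (r (S n))).

(* x and y lie in the same component of H - S: joined by a walk in H
   avoiding S *)
Inductive conn_avoid {V} (H : graph V) (S : list V) : V -> V -> Prop :=
| ca_refl : forall x, gv H x -> ~ In x S -> conn_avoid H S x x
| ca_step : forall x y z, ge H x y -> ~ In x S ->
    conn_avoid H S y z -> conn_avoid H S x z.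

Definition same_comp_tails {V} (H : graph V) (S : list V)
  (r1 r2 : nat -> V) : Prop :=
  exists k1 k2, forall n m, k1 <= n -> k2 <= m ->
    conn_avoid H S (r1 n) (r2 m).

Definition ray_equiv {V} (H : graph V) (r1 r2 : nat -> V) : Prop :=
  forall S : list V, (forall x, In x S -> gv H x) ->
    same_comp_tails H S r1 r2.

(* A is faithful to B: (i) every end of B contains a ray of A,
   (ii) rays of A are equivalent in A iff equivalent in B. *)
Definition faithful {V} (A B : graph V) : Prop :=
  (forall R, is_ray B R -> exists R', is_ray A R' /\ ray_equiv B R' R) /\
  (forall R1 R2, is_ray A R1 -> is_ray A R2 ->
     (ray_equiv A R1 R2 <-> ray_equiv B R1 R2)).

(* Ray equivalence is an equivalence relation, and it passes from a subgraph A
   to a supergraph B: for finite S ⊆ V(B), every walk of A avoiding S ∩ V(A)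
   is a walk of B avoiding S.  Since rays of A are also rays of B, each of the
   three implications is a chase through representatives of ends. *)
From Stdlib Require Import List Lia Classical.
Import ListNotations.

Section RayEquivalence.
Context {V : Type}.
Implicit Types (A B H : graph V) (S : list V) (r : nat -> V).

Lemma conn_avoid_start H S x y : conn_avoid H S x y -> gv H x /\ ~ In x S.
Proof.
  intros [x' Hx Hn | x' y' z Hxy Hn _]; [tauto|].
  split; [exact (proj1 (ge_vert _ H x' y' Hxy)) | exact Hn].
Qed.

Lemma conn_avoid_trans H S x y z :
  conn_avoid H S x y -> conn_avoid H S y z -> conn_avoid H S x z.
Proof.
  induction 1 as [x Hx Hn | x y' w Hxy Hn _ IH]; intro Hyz; [exact Hyz|].
  exact (ca_step _ _ _ _ _ Hxy Hn (IH Hyz)).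
Qed.

Lemma conn_avoid_sym H S x y : conn_avoid H S x y -> conn_avoid H S y x.
Proof.
  induction 1 as [x Hx Hn | x y z Hxy Hn Hyz IH]; [now constructor|].
  apply conn_avoid_trans with y; [exact IH|].
  destruct (conn_avoid_start _ _ _ _ Hyz) as [_ Hny].
  apply (ca_step _ _ y x x); [now apply ge_sym | exact Hny |].
  apply ca_refl; [exact (proj1 (ge_vert _ H x y Hxy)) | exact Hn].
Qed.

Lemma ray_equiv_sym H r1 r2 : ray_equiv H r1 r2 -> ray_equiv H r2 r1.
Proof.
  intros E S HS. destruct (E S HS) as [k1 [k2 Hk]].
  exists k2, k1. intros n m Hn Hm. now apply conn_avoid_sym, Hk.
Qed.

Lemma ray_equiv_trans H r1 r2 r3 :
  ray_equiv H r1 r2 -> ray_equiv H r2 r3 -> ray_equiv H r1 r3.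
Proof.
  intros E12 E23 S HS.
  destruct (E12 S HS) as [k1 [k2 Hk12]], (E23 S HS) as [k2' [k3 Hk23]].
  exists k1, k3. intros n m Hn Hm.
  apply conn_avoid_trans with (r2 (Nat.max k2 k2')).
  - apply Hk12; lia.
  - apply Hk23; lia.
Qed.

Lemma exists_list_filter (P : V -> Prop) S :
  exists S', forall x, In x S' <-> In x S /\ P x.
Proof.
  induction S as [|a S [S' HS']].
  - exists []. simpl. tauto.
  - destruct (classic (P a)) as [Pa | nPa]; [exists (a :: S') | exists S'];
      intro x; simpl; rewrite HS'; split; try intros [[<- | ?] ?]; intuition congruence.
Qed.

Lemma is_ray_subgraph A B r : subgraph A B -> is_ray A r -> is_ray B r.
Proof. intros [AvB AeB] [Rinj [Rv Re]]. repeat split; auto. Qed.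

Lemma conn_avoid_subgraph A B S S' x y :
  subgraph A B -> (forall v, gv A v -> In v S -> In v S') ->
  conn_avoid A S' x y -> conn_avoid B S x y.
Proof.
  intros [AvB AeB] HS'.
  induction 1 as [x Hx Hn | x y z Hxy Hn _ IH].
  - constructor; auto.
  - apply (ca_step _ _ x y z); auto.
    intro HxS. apply Hn, HS'; [exact (proj1 (ge_vert _ A x y Hxy)) | exact HxS].
Qed.

Lemma ray_equiv_subgraph A B r1 r2 :
  subgraph A B -> ray_equiv A r1 r2 -> ray_equiv B r1 r2.
Proof.
  intros AB E S _.
  destruct (exists_list_filter (gv A) S) as [S' HS'].
  destruct (E S') as [k1 [k2 Hk]]; [intros x Hx; apply HS' in Hx; tauto|].
  exists k1, k2. intros n m Hn Hm.
  apply conn_avoid_subgraph with A S'; [exact AB | | now apply Hk].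
  intros v Hv HvS. now apply HS'.
Qed.

End RayEquivalence.

Section Faithful.
Context {V : Type} (D F G : graph V).
Hypotheses (DF : subgraph D F) (FG : subgraph F G).

Lemma faithful_trans : faithful D F -> faithful F G -> faithful D G.
Proof.
  intros [ends_DF equiv_DF] [ends_FG equiv_FG]. split.
  - intros R HR.
    destruct (ends_FG R HR) as [Q [HQ EQ]], (ends_DF Q HQ) as [P [HP EP]].
    exists P. split; [exact HP|].
    apply ray_equiv_trans with Q; [exact (ray_equiv_subgraph _ _ _ _ FG EP) | exact EQ].
  - intros R1 R2 H1 H2. rewrite equiv_DF by assumption.
    apply equiv_FG; now apply is_ray_subgraph with D.
Qed.

Lemma faithful_cancel_l : faithful D F -> faithful D G -> faithful F G.
Proof.
  intros [ends_DF equiv_DF] [ends_DG equiv_DG]. split.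
  - intros R HR. destruct (ends_DG R HR) as [Q [HQ EQ]].
    exists Q. split; [now apply is_ray_subgraph with D | exact EQ].
  - intros R1 R2 H1 H2. split; [now apply ray_equiv_subgraph|].
    intro E.
    destruct (ends_DF R1 H1) as [Q1 [HQ1 E1]], (ends_DF R2 H2) as [Q2 [HQ2 E2]].
    assert (EQ_G : ray_equiv G Q1 Q2).
    { apply ray_equiv_trans with R1; [now apply ray_equiv_subgraph with F|].
      apply ray_equiv_trans with R2; [exact E|].
      apply ray_equiv_sym. now apply ray_equiv_subgraph with F. }
    assert (EQ_F : ray_equiv F Q1 Q2) by now apply equiv_DF, equiv_DG.
    apply ray_equiv_trans with Q1; [now apply ray_equiv_sym|].
    now apply ray_equiv_trans with Q2.
Qed.

Lemma faithful_cancel_r : faithful F G -> faithful D G -> faithful D F.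
Proof.
  intros [_ equiv_FG] [ends_DG equiv_DG]. split.
  - intros R HR. destruct (ends_DG R (is_ray_subgraph _ _ _ FG HR)) as [Q [HQ EQ]].
    exists Q. split; [exact HQ|].
    apply equiv_FG; [now apply is_ray_subgraph with D | exact HR | exact EQ].
  - intros R1 R2 H1 H2. rewrite equiv_DG by assumption.
    symmetry. apply equiv_FG; now apply is_ray_subgraph with D.
Qed.

End Faithful.

Theorem lemma5 (V : Type) (D F G : graph V) :
  locally_finite D -> locally_finite F -> locally_finite G ->
  subgraph D F -> subgraph F G ->
  ((faithful D F /\ faithful F G -> faithful D G) /\
   (faithful D F /\ faithful D G -> faithful F G) /\
   (faithful F G /\ faithful D G -> faithful D F)).
Proof.
  intros _ _ _ DF FG.
  split; [|split]; intros [H1 H2].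
  - exact (faithful_trans _ _ _ DF FG H1 H2).
  - exact (faithful_cancel_l _ _ _ DF FG H1 H2).
  - exact (faithful_cancel_r _ _ _ DF FG H1 H2).
Qed.
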